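(* Let $\widetilde\gamma$ be a Kähler metric on $\widetilde M_2$ (with respect to the complex structure inherited from $\mathbb{H}^2\times\mathbb{H}^2$) which is invariant under the group $G=PL(2,\mathbb{R})\times\{\mathrm{Id},P\}$. Then there exists a smooth function $A:(0,\infty)\to\mathbb{R}$ such that $$\widetilde\gamma=A_1(s)\,ds^2+A_2(s)\,\sigma_1^2+A_3(s)\,\sigma_2^2+A_4(s)\,\sigma_3^2,$$ where $$A_1=\frac{1}{8\sinh(s/2)}\frac{d}{ds}\Big(\frac{A(s)}{\cosh(s/2)}\Big),\quad A_2=A(s),\quad A_3=2\sinh(s/2)\frac{d}{ds}\Big(\frac{A(s)}{\cosh(s/2)}\Big),\quad A_4=\frac{A(s)}{\cosh^2(s/2)}.$$
   Context: $\mathbb{H}^2=\{x+iy\in\mathbb{C}:y>0\}$ is the upper half plane. $\widetilde M_2=\mathbb{H}^2\times\mathbb{H}^2\setminus\{(z,z):z\in\mathbb{H}^2\}$, a complex manifold with coordinates $(z_1,z_2)$. $PL(2,\mathbb{R})$ denotes the group of real $2\times2$ matrices of positive determinant modulo nonzero scalars (equivalently $SL(2,\mathbb{R})/\{\pm I\}$), acting on $\mathbb{H}^2$ by $M\odot z=(az+b)/(cz+d)$ for $M=\begin{pmatrix}a&b\\c&d\end{pmatrix}$, and on $\widetilde M_2$ diagonally: $(z_1,z_2)\mapsto(M\odot z_1,M\odot z_2)$. $P:(z_1,z_2)\mapsto(z_2,z_1)$. For $s>0$ put $w_s=(ie^{s/2},ie^{-s/2})$; the map $(0,\infty)\times PL(2,\mathbb{R})\to\widetilde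 M_2$, $(s,g)\mapsto g\cdot w_s$, is a diffeomorphism, and we use $(s,g)$ as coordinates. Let $e_1=\begin{pmatrix}0&1\\1&0\end{pmatrix}$, $e_2=\begin{pmatrix}0&1\\-1&0\end{pmatrix}$, $e_3=\begin{pmatrix}1&0\\0&-1\end{pmatrix}$ be a basis of the Lie algebra of $PL(2,\mathbb{R})$, and let $\sigma_1,\sigma_2,\sigma_3$ be the left-invariant 1-forms on $PL(2,\mathbb{R})$ dual to the corresponding left-invariant vector fields, pulled back to $\widetilde M_2$ via the coordinates $(s,g)$. Juxtaposition of 1-forms means symmetric tensor product. *)

(* classical reals. Everything is written in the real
   coordinates (x1,y1,x2,y2) of H^2 x H^2 subset R^4, z_k = x_k + i y_k. *)
From Stdlib Require Import Reals Lra.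
Open Scope R_scope.

Definition pt : Type := (R * R * R * R)%type.   (* (x1, y1, x2, y2) *)

Definition coord (p : pt) (i : nat) : R :=
  let '(a, b, c, d) := p in
  match i with 0%nat => a | 1%nat => b | 2%nat => c | _ => d end.

Definition upd (p : pt) (i : nat) (t : R) : pt :=
  let '(a, b, c, d) := p in
  match i with
  | 0%nat => (t, b, c, d) | 1%nat => (a, t, c, d)
  | 2%nat => (a, b, t, d) | _ => (a, b, c, t) end.

(* tangent vectors: components in the basis d/dx1, d/dy1, d/dx2, d/dy2
   (indices 0..3) *)
Definition vec : Type := nat -> R.
Definition mkvec (a b c d : R) : vec := fun i =>
  match i with 0%nat => a | 1%nat => b | 2%nat => c | 3%nat => d | _ => 0 end.
Definition basis (i : nat) : vec := fun j => if Nat.eqb i j then 1 else 0.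

Definition M2 (p : pt) : Prop :=
  0 < coord p 1 /\ 0 < coord p 3 /\
  (coord p 0 <> coord p 2 \/ coord p 1 <> coord p 3).

Definition dist4 (p q : pt) : R :=
  Rmax (Rmax (Rabs (coord p 0 - coord q 0)) (Rabs (coord p 1 - coord q 1)))
       (Rmax (Rabs (coord p 2 - coord q 2)) (Rabs (coord p 3 - coord q 3))).

Definition cont_on (U : pt -> Prop) (f : pt -> R) : Prop :=
  forall p, U p -> forall eps, 0 < eps -> exists delta, 0 < delta /\
    forall q, U q -> dist4 p q < delta -> Rabs (f q - f p) < eps.

Definition has_partial (U : pt -> Prop) (f : pt -> R) (i : nat) (df : pt -> R) :=
  forall p, U p -> derivable_pt_lim (fun t => f (upd p i t)) (coord p i) (df p).

Fixpoint Ck_on (U : pt -> Prop) (k : nat) (f : pt -> R) : Prop :=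
  match k with
  | 0%nat => cont_on U f
  | S k' => cont_on U f /\
      forall i, (i < 4)%nat -> exists df, has_partial U f i df /\ Ck_on U k' df
  end.

Definition smooth_on (U : pt -> Prop) (f : pt -> R) : Prop :=
  forall k, Ck_on U k f.

Fixpoint Ck_pos (k : nat) (f : R -> R) : Prop :=
  match k with
  | 0%nat => forall s, 0 < s -> continuity_pt f s
  | S k' => (forall s, 0 < s -> continuity_pt f s) /\
      exists df, (forall s, 0 < s -> derivable_pt_lim f s (df s)) /\ Ck_pos k' df
  end.

Definition smooth_pos (f : R -> R) : Prop := forall k, Ck_pos k f.

(* a metric field: gm p i j is the (i,j) component at p, i,j in 0..3 *)
Definition metric_field : Type := pt -> nat -> nat -> R.

Definition sum4 (f : nat -> R) : R := f 0%nat + f 1%nat + f 2%nat + f 3%nat.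

Definition met (gm : metric_field) (p : pt) (v w : vec) : R :=
  sum4 (fun i => sum4 (fun j => gm p i j * v i * w j)).

Definition Jv (v : vec) : vec := mkvec (- v 1%nat) (v 0%nat) (- v 3%nat) (v 2%nat).

Definition kform (gm : metric_field) (p : pt) (i j : nat) : R :=
  met gm p (Jv (basis i)) (basis j).

Definition is_kahler_metric (gm : metric_field) : Prop :=
  (forall i j, (i < 4)%nat -> (j < 4)%nat -> smooth_on M2 (fun p => gm p i j)) /\
  (forall p i j, M2 p -> (i < 4)%nat -> (j < 4)%nat -> gm p i j = gm p j i) /\
  (forall p (v : vec), M2 p ->
     (v 0%nat <> 0 \/ v 1%nat <> 0 \/ v 2%nat <> 0 \/ v 3%nat <> 0) ->
     0 < met gm p v v) /\
  (forall p v w, M2 p -> met gm p (Jv v) (Jv w) = met gm p v w) /\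
  (* the Kaehler form is closed: d omega = 0 *)
  (forall p i j k a b c, M2 p -> (i < 4)%nat -> (j < 4)%nat -> (k < 4)%nat ->
     derivable_pt_lim (fun t => kform gm (upd p i t) j k) (coord p i) a ->
     derivable_pt_lim (fun t => kform gm (upd p j t) k i) (coord p j) b ->
     derivable_pt_lim (fun t => kform gm (upd p k t) i j) (coord p k) c ->
     a + b + c = 0).

Definition Cmul (z w : R * R) : R * R :=
  (fst z * fst w - snd z * snd w, fst z * snd w + snd z * fst w).
Definition Cinv (z : R * R) : R * R :=
  let n := fst z * fst z + snd z * snd z in (fst z / n, - snd z / n).
Definition Cadd (z w : R * R) : R * R := (fst z + fst w, snd z + snd w).
Definition Cscal (r : R) (z : R * R) : R * R := (r * fst z, r * snd z).

(* a matrix (a b; c d) with ad - bc > 0 represents an element of PL(2,R) *)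
Definition mob (a b c d : R) (z : R * R) : R * R :=
  Cmul (Cadd (Cscal a z) (b, 0)) (Cinv (Cadd (Cscal c z) (d, 0))).

(* complex derivative of z |-> (az+b)/(cz+d):  (ad-bc)/(cz+d)^2 *)
Definition mob_der (a b c d : R) (z : R * R) : R * R :=
  Cscal (a * d - b * c)
    (Cinv (Cmul (Cadd (Cscal c z) (d, 0)) (Cadd (Cscal c z) (d, 0)))).

Definition z1 (p : pt) : R * R := (coord p 0, coord p 1).
Definition z2 (p : pt) : R * R := (coord p 2, coord p 3).
Definition of_zz (u v : R * R) : pt := (fst u, snd u, fst v, snd v).
Definition vec_of_zz (u v : R * R) : vec := mkvec (fst u) (snd u) (fst v) (snd v).

Definition act (a b c d : R) (p : pt) : pt :=
  of_zz (mob a b c d (z1 p)) (mob a b c d (z2 p)).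
Definition dact (a b c d : R) (p : pt) (v : vec) : vec :=
  vec_of_zz (Cmul (mob_der a b c d (z1 p)) (v 0%nat, v 1%nat))
            (Cmul (mob_der a b c d (z2 p)) (v 2%nat, v 3%nat)).

Definition swap (p : pt) : pt := of_zz (z2 p) (z1 p).
Definition dswap (v : vec) : vec := mkvec (v 2%nat) (v 3%nat) (v 0%nat) (v 1%nat).

Definition G_invariant (gm : metric_field) : Prop :=
  (forall a b c d p v w, 0 < a * d - b * c -> M2 p ->
     met gm (act a b c d p) (dact a b c d p v) (dact a b c d p w) = met gm p v w) /\
  (forall p v w, M2 p -> met gm (swap p) (dswap v) (dswap w) = met gm p v w).

Definition ws (s : R) : pt := (0, exp (s / 2), 0, exp (- s / 2)).
Definition dws (s : R) : vec := mkvec 0 (exp (s / 2) / 2) 0 (- exp (- s / 2) / 2).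

(* infinitesimal Moebius action of X = (a b; c d) in sl(2,R):
   z |-> b + (a - d) z - c z^2 *)
Definition inf_act (a b c d : R) (z : R * R) : R * R :=
  Cadd (b, 0) (Cadd (Cscal (a - d) z) (Cscal (- c) (Cmul z z))).
Definition inf_vec (a b c d : R) (p : pt) : vec :=
  vec_of_zz (inf_act a b c d (z1 p)) (inf_act a b c d (z2 p)).

Definition Xe (i : nat) (p : pt) : vec :=
  match i with
  | 1%nat => inf_vec 0 1 1 0 p
  | 2%nat => inf_vec 0 1 (-1) 0 p
  | _ => inf_vec 1 0 0 (-1) p
  end.

(* Frame at g . w_s (g = class of (a b; c d)):
   index 0 : d/ds ;  index i = 1,2,3 : left-invariant field of e_i,
   i.e. d/dt|_{t=0} (g exp(t e_i)) . w_s = dg (X_{e_i}(w_s)).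
   This frame is dual to the coframe (ds, sigma_1, sigma_2, sigma_3). *)
Definition frame (a b c d s : R) (i : nat) : vec :=
  match i with
  | 0%nat => dact a b c d (ws s) (dws s)
  | _ => dact a b c d (ws s) (Xe i (ws s))
  end.

(* By G-invariance the metric is determined by its values at the points (i r, i), r > 1
   ([slice r]); w_s is such a point up to the dilation z |-> e^(-s/2) z.  There,
   J-invariance and the element (z1, z2) |-> (-r/z2, -r/z1) of G, which fixes (i r, i),
   leave two unknown functions B(r) = gamma(d/dx2, d/dx2) and C(r) = gamma(d/dx1, d/dx2).
   Closedness of the Kaehler form on (d/dx1, d/dy1, d/dy2) and (d/dx2, d/dy1, d/dy2), where
   translation and dilation invariance turn x2- and y2-derivatives into derivatives along
   the slice, gives (1 + r) C' + (1 + 1/r) B' + 2 C = 0.  With r = e^s and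
   A = 8 cosh^2(s/2) (B + r C) this reads (A / cosh(s/2))' = 4 sinh(s/2) (B - r C), and the
   Gram matrix of the frame at w_s, computed from B and C, has the stated entries. *)

From Stdlib Require Import Reals Lra Lia FunctionalExtensionality.
Open Scope R_scope.

Lemma derivable_pt_lim_exp_scal a x :
  derivable_pt_lim (fun t => exp (a * t)) x (a * exp (a * x)).
Proof.
  assert (Hlin : derivable_pt_lim (fun t => a * t) x a).
  { pose proof (derivable_pt_lim_scal id a x 1 (derivable_pt_lim_id x)) as H.
    rewrite Rmult_1_r in H; exact H. }
  rewrite Rmult_comm.
  exact (derivable_pt_lim_comp (fun t => a * t) exp x a _ Hlin (derivable_pt_lim_exp _)).
Qed.

Lemma exp_gt_1 s : 0 < s -> 1 < exp s.
Proof. intros Hs; rewrite <- exp_0; apply exp_increasing, Hs. Qed.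

Lemma exp_half_sqr s : exp s = exp (s / 2) * exp (s / 2).
Proof. rewrite <- exp_plus; f_equal; field. Qed.

Lemma cosh_exp s : cosh s = (exp s + / exp s) / 2.
Proof. unfold cosh; rewrite exp_Ropp; reflexivity. Qed.

Lemma sinh_exp s : sinh s = (exp s - / exp s) / 2.
Proof. unfold sinh; rewrite exp_Ropp; reflexivity. Qed.

Lemma cosh_pos s : 0 < cosh s.
Proof.
  rewrite cosh_exp; pose proof (exp_pos s).
  assert (0 < / exp s) by (apply Rinv_0_lt_compat; lra); lra.
Qed.

Lemma derivable_pt_lim_comp_exp g s l : derivable_pt_lim g (exp s) l ->
  derivable_pt_lim (fun t => g (exp t)) s (l * exp s).
Proof. exact (derivable_pt_lim_comp exp g s (exp s) l (derivable_pt_lim_exp s)). Qed.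

Lemma derivable_pt_lim_cosh_half s :
  derivable_pt_lim (fun t => cosh (t / 2)) s (sinh (s / 2) / 2).
Proof.
  pose proof (derivable_pt_lim_div_scal id s 1 2 (derivable_pt_lim_id s)) as Hhalf.
  pose proof (derivable_pt_lim_comp (fun t => t / 2) cosh s _ _ Hhalf (derivable_pt_lim_cosh _))
    as H.
  replace (sinh (s / 2) / 2) with (sinh (s / 2) * (1 / 2)) by field; exact H.
Qed.

Lemma derivable_pt_lim_reflect f l :
  derivable_pt_lim f 0 l -> derivable_pt_lim (fun t => f (- t)) 0 (- l).
Proof.
  intros Hf.
  pose proof (derivable_pt_lim_opp id 0 1 (derivable_pt_lim_id 0)) as Hopp.
  replace (- l) with (l * -1) by ring.
  apply (derivable_pt_lim_comp (fun t => - t) f 0 (-1) l Hopp).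
  unfold id; rewrite Ropp_0; exact Hf.
Qed.

Lemma derivable_pt_lim_rescale f r l : 0 < r -> derivable_pt_lim f r l ->
  derivable_pt_lim (fun t => f (r / t) / t ^ 2) 1 (- r * l - 2 * f r).
Proof.
  intros Hr Hf.
  assert (Hq : derivable_pt_lim (fun t => r / t) 1 (- r)).
  { pose proof (derivable_pt_lim_div (fun _ => r) id 1 0 1
      (derivable_pt_lim_const r 1) (derivable_pt_lim_id 1) ltac:(unfold id; lra)) as H.
    unfold id, Rsqr in H; replace (- r) with ((0 * 1 - 1 * r) / (1 * 1)) by field; exact H. }
  assert (Hc : derivable_pt_lim (fun t => f (r / t)) 1 (l * - r)).
  { apply (derivable_pt_lim_comp (fun t => r / t) f 1 (- r) l Hq).
    replace (r / 1) with r by field; exact Hf. }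
  pose proof (derivable_pt_lim_div _ (fun t => t ^ 2) 1 _ _ Hc (derivable_pt_lim_pow 1 2)
    ltac:(simpl; lra)) as H.
  cbv beta in H; replace (r / 1) with r in H by field.
  replace (- r * l - 2 * f r) with ((l * - r * 1 ^ 2 - INR 2 * 1 ^ pred 2 * f r) / (1 ^ 2)²)
    by (simpl; unfold Rsqr; field).
  exact H.
Qed.

Lemma Ck_pos_pred k f : Ck_pos (S k) f -> Ck_pos k f.
Proof.
  revert f; induction k as [|k IH]; intros f [Hc [df [Hdf Hk]]].
  - exact Hc.
  - split; [exact Hc | exists df; split; [exact Hdf | apply IH, Hk]].
Qed.

Lemma Ck_pos_continuity k f : Ck_pos k f -> forall s, 0 < s -> continuity_pt f s.
Proof. destruct k; simpl; tauto. Qed.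

Lemma Ck_pos_ext k f g : (forall t, f t = g t) -> Ck_pos k f -> Ck_pos k g.
Proof. intros Hfg; replace g with f by (apply functional_extensionality; exact Hfg); tauto. Qed.

Lemma Ck_pos_const k c : Ck_pos k (fun _ => c).
Proof.
  assert (Hc : forall c s, continuity_pt (fun _ : R => c) s)
    by (intros; apply continuity_pt_const; intros ? ?; reflexivity).
  revert c; induction k as [|k IH]; intros c; [intros s _; apply Hc |].
  split; [intros s _; apply Hc |].
  exists (fun _ => 0); split; [intros s _; apply derivable_pt_lim_const | apply IH].
Qed.

Lemma Ck_pos_plus k f g : Ck_pos k f -> Ck_pos k g -> Ck_pos k (fun t => f t + g t).
Proof.
  revert f g; induction k as [|k IH]; intros f g Hf Hg.
  - intros s Hs; apply (continuity_pt_plus f g); auto.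
  - split.
    + intros s Hs; apply (continuity_pt_plus f g); eapply Ck_pos_continuity; eauto.
    + destruct Hf as [_ [df [Hdf Hkf]]], Hg as [_ [dg [Hdg Hkg]]].
      exists (fun t => df t + dg t); split; [|auto].
      intros s Hs; exact (derivable_pt_lim_plus f g s _ _ (Hdf s Hs) (Hdg s Hs)).
Qed.

Lemma Ck_pos_mult k f g : Ck_pos k f -> Ck_pos k g -> Ck_pos k (fun t => f t * g t).
Proof.
  revert f g; induction k as [|k IH]; intros f g Hf Hg.
  - intros s Hs; apply (continuity_pt_mult f g); auto.
  - split.
    + intros s Hs; apply (continuity_pt_mult f g); eapply Ck_pos_continuity; eauto.
    + pose proof (Ck_pos_pred _ _ Hf) as Hf'; pose proof (Ck_pos_pred _ _ Hg) as Hg'.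
      destruct Hf as [_ [df [Hdf Hkf]]], Hg as [_ [dg [Hdg Hkg]]].
      exists (fun t => df t * g t + f t * dg t); split.
      * intros s Hs; exact (derivable_pt_lim_mult f g s _ _ (Hdf s Hs) (Hdg s Hs)).
      * apply Ck_pos_plus; apply IH; auto.
Qed.

Lemma Ck_pos_exp_scal k a : Ck_pos k (fun t => exp (a * t)).
Proof.
  assert (Hc : forall a s, continuity_pt (fun t => exp (a * t)) s)
    by (intros b s; apply derivable_continuous_pt; eexists; apply derivable_pt_lim_exp_scal).
  revert a; induction k as [|k IH]; intros a; [intros s _; apply Hc|].
  split; [intros s _; apply Hc|].
  exists (fun t => a * exp (a * t)); split.
  - intros s _; apply derivable_pt_lim_exp_scal.
  - apply Ck_pos_mult; [apply Ck_pos_const | apply IH].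
Qed.

Lemma Ck_pos_exp k : Ck_pos k exp.
Proof.
  apply (Ck_pos_ext _ (fun t => exp (1 * t))); [intro t; rewrite Rmult_1_l; reflexivity |].
  apply Ck_pos_exp_scal.
Qed.

Definition slice (r : R) : pt := (0, r, 0, 1).

Lemma M2_slice r : 0 < r -> r <> 1 -> M2 (slice r).
Proof. intros Hr Hr1; unfold M2, slice; simpl; repeat split; auto; lra. Qed.

Lemma Ck_pos_slice_exp k f : Ck_on M2 (S k) f -> Ck_pos k (fun s => f (slice (exp s))).
Proof.
  assert (Hder : forall g dg s, has_partial M2 g 1 dg -> 0 < s ->
            derivable_pt_lim (fun t => g (slice (exp t))) s (dg (slice (exp s)) * exp s)).
  { intros g dg s Hg Hs; apply (derivable_pt_lim_comp_exp (fun r => g (slice r))).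
    apply (Hg (slice (exp s))), M2_slice; [apply exp_pos | apply exp_gt_1 in Hs; lra]. }
  revert f; induction k as [|k IH]; intros f [_ Hpartial];
    destruct (Hpartial 1%nat ltac:(lia)) as [df [Hdf Hk]].
  - intros s Hs; apply derivable_continuous_pt; eexists; apply Hder; eauto.
  - split; [intros s Hs; apply derivable_continuous_pt; eexists; apply Hder; eauto |].
    exists (fun s => df (slice (exp s)) * exp s); split; [intros; apply Hder; auto |].
    apply Ck_pos_mult; [apply IH, Hk | apply Ck_pos_exp].
Qed.

Lemma met_ext gm p v w v' w' :
  (forall i, (i < 4)%nat -> v i = v' i) -> (forall i, (i < 4)%nat -> w i = w' i) ->
  met gm p v w = met gm p v' w'.
Proof.
  intros Hv Hw; unfold met, sum4.
  rewrite !Hv, !Hw by lia; reflexivity.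
Qed.

Lemma met_scal gm p c v w :
  met gm p (fun k => c * v k) (fun k => c * w k) = c ^ 2 * met gm p v w.
Proof. unfold met, sum4; ring. Qed.

Lemma met_basis gm p i j : (i < 4)%nat -> (j < 4)%nat ->
  met gm p (basis i) (basis j) = gm p i j.
Proof.
  intros Hi Hj; unfold met, sum4, basis.
  destruct i as [|[|[|[|i]]]]; try lia; destruct j as [|[|[|[|j]]]]; try lia; simpl; ring.
Qed.

Lemma act_affine l t p :
  act l t 0 1 p = (l * coord p 0 + t, l * coord p 1, l * coord p 2 + t, l * coord p 3).
Proof.
  unfold act, mob, of_zz, z1, z2, Cmul, Cinv, Cadd, Cscal; simpl.
  repeat apply (f_equal2 pair); field.
Qed.

Lemma dact_affine l t p v k : (k < 4)%nat -> dact l t 0 1 p v k = l * v k.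
Proof.
  intros Hk; unfold dact, mob_der, vec_of_zz, z1, z2, Cmul, Cinv, Cadd, Cscal, mkvec.
  destruct k as [|[|[|[|k]]]]; try lia; simpl; field.
Qed.

Lemma kform_entry gm p i j : (i < 4)%nat -> (j < 4)%nat ->
  kform gm p i j = if Nat.even i then gm p (S i) j else - gm p (pred i) j.
Proof.
  intros Hi Hj; unfold kform, met, sum4, Jv, mkvec, basis.
  destruct i as [|[|[|[|i]]]]; try lia; destruct j as [|[|[|[|j]]]]; try lia; simpl; ring.
Qed.

(* The frame of the statement at [ws s], i.e. [frame 1 0 0 1 s], written with [u = e^(s/2)]. *)
Definition ws_frame (u : R) (i : nat) : vec :=
  match i with
  | 0%nat => mkvec 0 (u / 2) 0 (- / u / 2)
  | 1%nat => mkvec (1 + u * u) 0 (1 + / u * / u) 0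
  | 2%nat => mkvec (1 - u * u) 0 (1 - / u * / u) 0
  | _ => mkvec 0 (2 * u) 0 (2 * / u)
  end.

Lemma dact_ext a b c d p v v' : (forall k, (k < 4)%nat -> v k = v' k) ->
  dact a b c d p v = dact a b c d p v'.
Proof. intros H; unfold dact; rewrite !H by lia; reflexivity. Qed.

Lemma M2_ws s : 0 < s -> M2 (ws s).
Proof.
  intros Hs; pose proof (exp_gt_1 (s / 2) ltac:(lra)).
  assert (exp (- s / 2) < 1)
    by (replace (- s / 2) with (- (s / 2)) by field; rewrite exp_Ropp;
        rewrite <- Rinv_1; apply Rinv_lt_contravar; lra).
  unfold M2, ws; simpl; repeat split; try apply exp_pos; right; lra.
Qed.

Lemma frame_dact a b c d s i : (i < 4)%nat ->
  frame a b c d s i = dact a b c d (ws s) (ws_frame (exp (s / 2)) i).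
Proof.
  intros Hi; pose proof (exp_pos (s / 2)) as Hu.
  assert (Hneg : exp (- s / 2) = / exp (s / 2))
    by (rewrite <- exp_Ropp; f_equal; field).
  destruct i as [|[|[|[|i]]]]; try lia; unfold frame; apply dact_ext; intros k Hk;
    unfold dws, Xe, inf_vec, inf_act, vec_of_zz, ws, z1, z2, coord, Cadd, Cscal, Cmul,
      ws_frame, mkvec; rewrite Hneg;
    destruct k as [|[|[|[|k]]]]; try lia; simpl; field; lra.
Qed.

Definition frame_coef (A : R -> R) (s D : R) (i : nat) : R :=
  match i with
  | 0%nat => / (8 * sinh (s / 2)) * D
  | 1%nat => A s
  | 2%nat => 2 * sinh (s / 2) * D
  | _ => A s / (cosh (s / 2) ^ 2)
  end.

Section InvariantMetric.

Variable gm : metric_field.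
Hypothesis gm_invariant : G_invariant gm.
Hypothesis gm_kahler : is_kahler_metric gm.

Lemma gm_act_affine l t p i j : 0 < l -> M2 p -> (i < 4)%nat -> (j < 4)%nat ->
  l ^ 2 * gm (act l t 0 1 p) i j = gm p i j.
Proof.
  intros Hl Hp Hi Hj.
  destruct gm_invariant as [Hact _].
  rewrite <- (met_basis gm p i j), <- (Hact l t 0 1 p) by (auto; lra).
  rewrite (met_ext gm _ _ _ (fun k => l * basis i k) (fun k => l * basis j k))
    by (intros; apply dact_affine; auto).
  rewrite met_scal, met_basis by auto; reflexivity.
Qed.

Lemma gm_translate r t i j : 0 < r -> r <> 1 -> (i < 4)%nat -> (j < 4)%nat ->
  gm (0, r, t, 1) i j = gm (- t, r, 0, 1) i j.
Proof.
  intros Hr Hr1 Hi Hj.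
  rewrite <- (gm_act_affine 1 t (- t, r, 0, 1)) by (unfold M2; simpl; auto; lra).
  rewrite act_affine; simpl.
  replace (1 * - t + t) with 0 by ring; rewrite !Rmult_1_l, Rplus_0_l; ring.
Qed.

Lemma gm_dilate r t i j : 0 < r -> 0 < t -> r <> t -> (i < 4)%nat -> (j < 4)%nat ->
  gm (0, r, 0, t) i j = gm (slice (r / t)) i j / t ^ 2.
Proof.
  intros Hr Ht Hrt Hi Hj.
  assert (Hrt' : r / t <> 1) by
    (intro E; apply Hrt; replace r with (r / t * t) by (field; lra); rewrite E; ring).
  rewrite <- (gm_act_affine t 0 (slice (r / t))) by (auto; apply M2_slice; auto;
    apply Rdiv_lt_0_compat; auto).
  rewrite act_affine; unfold slice; simpl.
  replace (t * 0 + 0) with 0 by ring; replace (t * (r / t)) with r by (field; lra).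
  rewrite Rmult_1_r; field; lra.
Qed.

Lemma met_entrywise_scale q p c v w :
  (forall i j, (i < 4)%nat -> (j < 4)%nat -> gm q i j = c * gm p i j) ->
  met gm q v w = c * met gm p v w.
Proof. intros H; unfold met, sum4; rewrite !H by lia; ring. Qed.

Lemma met_act_affine l t p v w : 0 < l -> M2 p ->
  met gm (act l t 0 1 p) v w = / l ^ 2 * met gm p v w.
Proof.
  intros Hl Hp; apply met_entrywise_scale; intros i j Hi Hj.
  rewrite <- (gm_act_affine l t p i j) by auto.
  field; lra.
Qed.

Lemma met_ws s v w : 0 < s -> met gm (ws s) v w = exp s * met gm (slice (exp s)) v w.
Proof.
  intros Hs.
  pose proof (exp_pos (s / 2)) as Hu.
  assert (Hws : act (/ exp (s / 2)) 0 0 1 (slice (exp s)) = ws s).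
  { rewrite act_affine; unfold ws, slice; simpl.
    rewrite (exp_half_sqr s); replace (- s / 2) with (- (s / 2)) by field; rewrite exp_Ropp.
    repeat apply (f_equal2 pair); field; lra. }
  transitivity (met gm (act (/ exp (s / 2)) 0 0 1 (slice (exp s))) v w);
    [rewrite Hws; reflexivity | rewrite met_act_affine].
  - rewrite (exp_half_sqr s); field; lra.
  - apply Rinv_0_lt_compat; exact Hu.
  - apply M2_slice; [apply exp_pos | pose proof (exp_gt_1 s Hs); lra].
Qed.

(* The differential at [slice r] of (z1, z2) |-> (-r/z2, -r/z1), the element of
   G built from P and [[0, -r], [1, 0]]; it fixes [slice r]. *)
Definition slice_flip (r : R) (v : vec) : vec :=
  mkvec (- r * v 2%nat) (- r * v 3%nat) (- / r * v 0%nat) (- / r * v 1%nat).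

Lemma met_slice_flip r v w : 0 < r -> r <> 1 ->
  met gm (slice r) (slice_flip r v) (slice_flip r w) = met gm (slice r) v w.
Proof.
  intros Hr Hr1.
  destruct gm_invariant as [Hact Hswap].
  assert (Hpt : act 0 (- r) 1 0 (swap (slice r)) = slice r).
  { unfold act, mob, swap, of_zz, z1, z2, slice, coord, Cmul, Cinv, Cadd, Cscal; simpl.
    repeat apply (f_equal2 pair); field; lra. }
  assert (Hvec : forall u k, (k < 4)%nat ->
            dact 0 (- r) 1 0 (swap (slice r)) (dswap u) k = slice_flip r u k).
  { intros u k Hk.
    unfold dact, slice_flip, mob_der, swap, dswap, of_zz, vec_of_zz, z1, z2, slice, coord,
      Cmul, Cinv, Cadd, Cscal.
    destruct k as [|[|[|[|k]]]]; simpl; try lia; field; lra. }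
  transitivity (met gm (act 0 (- r) 1 0 (swap (slice r)))
                  (dact 0 (- r) 1 0 (swap (slice r)) (dswap v))
                  (dact 0 (- r) 1 0 (swap (slice r)) (dswap w))).
  { rewrite Hpt; apply met_ext; intros; symmetry; apply Hvec; auto. }
  assert (HM : M2 (swap (slice r)))
    by (unfold M2, swap, slice, of_zz, z1, z2; simpl; repeat split; auto; lra).
  rewrite Hact by (auto; lra).
  apply Hswap, M2_slice; auto.
Qed.

Lemma gm_hermitian_entries p : M2 p ->
  gm p 1%nat 1%nat = gm p 0%nat 0%nat /\ gm p 3%nat 3%nat = gm p 2%nat 2%nat /\
  gm p 1%nat 3%nat = gm p 0%nat 2%nat /\ gm p 1%nat 2%nat = - gm p 0%nat 3%nat /\
  gm p 0%nat 1%nat = 0 /\ gm p 2%nat 3%nat = 0.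
Proof.
  intros Hp; destruct gm_kahler as [_ [Hsym [_ [Hherm _]]]].
  assert (HJ : forall i j, (i < 4)%nat -> (j < 4)%nat ->
            met gm p (Jv (basis i)) (Jv (basis j)) = gm p i j)
    by (intros i j Hi Hj; rewrite Hherm, met_basis by auto; reflexivity).
  pose proof (HJ 0%nat 0%nat ltac:(lia) ltac:(lia)) as E00.
  pose proof (HJ 2%nat 2%nat ltac:(lia) ltac:(lia)) as E22.
  pose proof (HJ 0%nat 2%nat ltac:(lia) ltac:(lia)) as E02.
  pose proof (HJ 0%nat 3%nat ltac:(lia) ltac:(lia)) as E03.
  pose proof (HJ 0%nat 1%nat ltac:(lia) ltac:(lia)) as E01.
  pose proof (HJ 2%nat 3%nat ltac:(lia) ltac:(lia)) as E23.
  unfold met, sum4, Jv, mkvec, basis in E00, E22, E02, E03, E01, E23; simpl in *.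
  pose proof (Hsym p 0%nat 1%nat Hp ltac:(lia) ltac:(lia)).
  pose proof (Hsym p 2%nat 3%nat Hp ltac:(lia) ltac:(lia)).
  repeat split; lra.
Qed.

Definition slice_B (r : R) : R := gm (slice r) 2%nat 2%nat.
Definition slice_C (r : R) : R := gm (slice r) 0%nat 2%nat.

Lemma met_slice r v w : 0 < r -> r <> 1 ->
  met gm (slice r) v w =
    slice_B r / r ^ 2 * (v 0%nat * w 0%nat + v 1%nat * w 1%nat)
  + slice_B r * (v 2%nat * w 2%nat + v 3%nat * w 3%nat)
  + slice_C r * (v 0%nat * w 2%nat + v 2%nat * w 0%nat + v 1%nat * w 3%nat + v 3%nat * w 1%nat).
Proof.
  intros Hr Hr1.
  pose proof (M2_slice r Hr Hr1) as HM.
  destruct gm_kahler as [_ [Hsym _]].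
  destruct (gm_hermitian_entries _ HM) as (H11 & H33 & H13 & H12 & H01 & H23).
  assert (Hflip : forall i j, (i < 4)%nat -> (j < 4)%nat ->
            gm (slice r) i j = met gm (slice r) (slice_flip r (basis i)) (slice_flip r (basis j)))
    by (intros i j Hi Hj; rewrite met_slice_flip, met_basis by auto; reflexivity).
  pose proof (Hflip 0%nat 0%nat ltac:(lia) ltac:(lia)) as F00.
  pose proof (Hflip 0%nat 3%nat ltac:(lia) ltac:(lia)) as F03.
  unfold met, sum4, slice_flip, mkvec, basis in F00, F03; simpl in F00, F03.
  assert (Hsym' : forall i j, (i < 4)%nat -> (j < 4)%nat -> gm (slice r) i j = gm (slice r) j i)
    by (intros; apply Hsym; auto).
  assert (E00 : gm (slice r) 0%nat 0%nat = slice_B r / r ^ 2)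
    by (rewrite F00; unfold slice_B; field; lra).
  assert (E03 : gm (slice r) 0%nat 3%nat = 0).
  { rewrite (Hsym' 1%nat 2%nat) in H12 by lia.
    replace (gm (slice r) 2%nat 1%nat) with (gm (slice r) 0%nat 3%nat) in H12
      by (rewrite F03; field; lra).
    lra. }
  unfold met, sum4, slice_C.
  rewrite (Hsym' 1%nat 0%nat), (Hsym' 2%nat 0%nat), (Hsym' 3%nat 0%nat), (Hsym' 2%nat 1%nat),
    (Hsym' 3%nat 1%nat), (Hsym' 3%nat 2%nat) by lia.
  rewrite H11, H33, H13, H12, H01, H23, E03, E00; unfold slice_B; ring.
Qed.

Lemma derivable_y2_slice r i j f l : 1 < r -> (i < 4)%nat -> (j < 4)%nat ->
  (forall x, 1 < x -> gm (slice x) i j = f x) -> derivable_pt_lim f r l ->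
  derivable_pt_lim (fun t => gm (0, r, 0, t) i j) 1 (- r * l - 2 * f r).
Proof.
  intros Hr Hi Hj Hf Hl.
  apply (derivable_pt_lim_locally_ext (fun t => f (r / t) / t ^ 2) _ 1 0 r); [lra | |].
  - intros t Ht.
    assert (1 < r / t) by (apply (Rmult_lt_reg_r t); [lra | field_simplify; lra]).
    rewrite gm_dilate, Hf by (auto; lra); reflexivity.
  - apply derivable_pt_lim_rescale; [lra | exact Hl].
Qed.

Lemma derivable_x2_slice r i j l : 0 < r -> r <> 1 -> (i < 4)%nat -> (j < 4)%nat ->
  derivable_pt_lim (fun t => gm (t, r, 0, 1) i j) 0 l ->
  derivable_pt_lim (fun t => gm (0, r, t, 1) i j) 0 (- l).
Proof.
  intros Hr Hr1 Hi Hj Hl.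
  apply (derivable_pt_lim_ext (fun t => gm (- t, r, 0, 1) i j)).
  - intros t; symmetry; apply gm_translate; auto.
  - exact (derivable_pt_lim_reflect (fun t => gm (t, r, 0, 1) i j) l Hl).
Qed.

Lemma gm_partial_derivable p i j k : M2 p -> (i < 4)%nat -> (j < 4)%nat -> (k < 4)%nat ->
  exists l, derivable_pt_lim (fun t => gm (upd p k t) i j) (coord p k) l.
Proof.
  intros Hp Hi Hj Hk.
  destruct gm_kahler as [Hsmooth _].
  destruct (Hsmooth i j Hi Hj 1%nat) as [_ Hpartial].
  destruct (Hpartial k Hk) as [df [Hdf _]].
  exists (df p); exact (Hdf p Hp).
Qed.

(* [d omega (d/dx1, d/dy1, d/dy2) = 0] at [slice r]. *)
Lemma slice_closed_x1 r e03 dB dC : 1 < r ->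
  derivable_pt_lim (fun t => gm (t, r, 0, 1) 0%nat 3%nat) 0 e03 ->
  derivable_pt_lim slice_B r dB -> derivable_pt_lim slice_C r dC ->
  - e03 + - dC + - dB / r = 0.
Proof.
  intros Hr D03 HB HC.
  destruct gm_kahler as [_ [Hsym [_ [_ Hclosed]]]].
  assert (G11 : forall x, 1 < x -> gm (slice x) 1%nat 1%nat = slice_B x / x ^ 2)
    by (intros x Hx; rewrite <- (met_basis gm (slice x) 1 1), met_slice by (lia || lra);
        unfold basis; simpl; field; lra).
  assert (HB2 : derivable_pt_lim (fun x => slice_B x / x ^ 2) r
                  ((dB * r ^ 2 - INR 2 * r ^ pred 2 * slice_B r) / (r ^ 2)²))
    by (apply (derivable_pt_lim_div slice_B (fun x => x ^ 2)); auto;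
        [apply derivable_pt_lim_pow | apply pow_nonzero; lra]).
  replace (- dB / r) with
    (- r * ((dB * r ^ 2 - INR 2 * r ^ pred 2 * slice_B r) / (r ^ 2)²) - 2 * (slice_B r / r ^ 2))
    by (simpl; unfold Rsqr; field; lra).
  apply (Hclosed (slice r) 0%nat 1%nat 3%nat); try (apply M2_slice; lra); auto;
    cbn [upd coord slice].
  - apply (derivable_pt_lim_ext (fun t => - gm (t, r, 0, 1) 0%nat 3%nat));
      [intro t; rewrite kform_entry by lia; reflexivity | apply derivable_pt_lim_opp, D03].
  - apply (derivable_pt_lim_locally_ext (fun t => - slice_C t) _ r 1 (r + 1)); [lra | |].
    + intros t Ht; rewrite kform_entry by lia; simpl; unfold slice_C, slice.
      rewrite Hsym; auto; apply M2_slice; lra.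
    + apply derivable_pt_lim_opp, HC.
  - apply (derivable_pt_lim_ext (fun t => gm (0, r, 0, t) 1%nat 1%nat));
      [intro t; rewrite kform_entry by lia; reflexivity |].
    apply (derivable_y2_slice r 1 1 (fun x => slice_B x / x ^ 2)); auto.
Qed.

(* [d omega (d/dx2, d/dy1, d/dy2) = 0] at [slice r]. *)
Lemma slice_closed_x2 r e03 dB dC : 1 < r ->
  derivable_pt_lim (fun t => gm (t, r, 0, 1) 0%nat 3%nat) 0 e03 ->
  derivable_pt_lim slice_B r dB -> derivable_pt_lim slice_C r dC ->
  e03 + - dB + (- r * dC - 2 * slice_C r) = 0.
Proof.
  intros Hr D03 HB HC.
  destruct gm_kahler as [_ [_ [_ [_ Hclosed]]]].
  assert (G31 : forall x, 1 < x -> gm (slice x) 3%nat 1%nat = slice_C x)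
    by (intros x Hx; rewrite <- (met_basis gm (slice x) 3 1), met_slice by (lia || lra);
        unfold basis; simpl; ring).
  apply (Hclosed (slice r) 2%nat 1%nat 3%nat); try (apply M2_slice; lra); auto;
    cbn [upd coord slice].
  - apply (derivable_pt_lim_ext (fun t => - gm (0, r, t, 1) 0%nat 3%nat));
      [intro t; rewrite kform_entry by lia; reflexivity |].
    rewrite <- (Ropp_involutive e03).
    apply derivable_pt_lim_opp, derivable_x2_slice; auto; lra.
  - apply (derivable_pt_lim_ext (fun t => - slice_B t));
      [intro t; rewrite kform_entry by lia; reflexivity | apply derivable_pt_lim_opp, HB].
  - apply (derivable_pt_lim_ext (fun t => gm (0, r, 0, t) 3%nat 1%nat));
      [intro t; rewrite kform_entry by lia; reflexivity |].
    apply (derivable_y2_slice r 3 1 slice_C); auto.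
Qed.

(* Translation invariance makes the x1- and x2-derivatives of [gm _ 0 3] cancel. *)
Lemma slice_closed r dB dC : 1 < r ->
  derivable_pt_lim slice_B r dB -> derivable_pt_lim slice_C r dC ->
  (1 + r) * dC + (1 + / r) * dB + 2 * slice_C r = 0.
Proof.
  intros Hr HB HC.
  destruct (gm_partial_derivable (slice r) 0 3 0) as [e03 D03];
    try (apply M2_slice; lra); try lia.
  pose proof (slice_closed_x1 r e03 dB dC Hr D03 HB HC) as T1.
  pose proof (slice_closed_x2 r e03 dB dC Hr D03 HB HC) as T2.
  replace ((1 + r) * dC + (1 + / r) * dB + 2 * slice_C r)
    with (- ((- e03 + - dC + - dB / r) + (e03 + - dB + (- r * dC - 2 * slice_C r))))
    by (field; lra).
  rewrite T1, T2; ring.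
Qed.

(* [coef_A s] is the value of the metric on the left-invariant field of [e_1] at [w_s]. *)
Definition coef_A (s : R) : R :=
  8 * cosh (s / 2) ^ 2 * (slice_B (exp s) + exp s * slice_C (exp s)).

Lemma coef_A_smooth : smooth_pos coef_A.
Proof.
  intros k; destruct gm_kahler as [Hsmooth _].
  assert (Hg : forall i j, (i < 4)%nat -> (j < 4)%nat ->
                 Ck_pos k (fun s => gm (slice (exp s)) i j))
    by (intros i j Hi Hj; apply (Ck_pos_slice_exp k (fun p => gm p i j)), Hsmooth; auto).
  assert (Hcosh : Ck_pos k (fun s => cosh (s / 2))).
  { apply (Ck_pos_ext _ (fun t => (exp (/ 2 * t) + exp (- / 2 * t)) * / 2)).
    - intro t; unfold cosh; replace (/ 2 * t) with (t / 2) by field.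
      replace (- / 2 * t) with (- (t / 2)) by field; reflexivity.
    - apply Ck_pos_mult; [apply Ck_pos_plus; apply Ck_pos_exp_scal | apply Ck_pos_const]. }
  apply (Ck_pos_ext _ (fun s => (8 * (cosh (s / 2) * cosh (s / 2)))
           * (gm (slice (exp s)) 2%nat 2%nat + exp s * gm (slice (exp s)) 0%nat 2%nat))).
  { intro t; unfold coef_A, slice_B, slice_C; ring. }
  apply Ck_pos_mult; [apply Ck_pos_mult; [apply Ck_pos_const | apply Ck_pos_mult; auto] |].
  apply Ck_pos_plus; [apply Hg; lia | apply Ck_pos_mult; [apply Ck_pos_exp | apply Hg; lia]].
Qed.

Lemma derivable_coef_A_div_cosh s : 0 < s ->
  derivable_pt_lim (fun t => coef_A t / cosh (t / 2)) s
    (4 * sinh (s / 2) * (slice_B (exp s) - exp s * slice_C (exp s))).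
Proof.
  intros Hs.
  pose proof (exp_gt_1 s Hs) as Hr.
  assert (HM : M2 (slice (exp s))) by (apply M2_slice; lra).
  destruct (gm_partial_derivable _ 2 2 1 HM) as [dB HB]; try lia.
  destruct (gm_partial_derivable _ 0 2 1 HM) as [dC HC]; try lia.
  pose proof (slice_closed (exp s) dB dC Hr HB HC) as Hode.
  assert (Hsum : derivable_pt_lim (fun t => slice_B (exp t) + exp t * slice_C (exp t)) s
                  (dB * exp s + (exp s * slice_C (exp s) + exp s * (dC * exp s)))).
  { apply (derivable_pt_lim_plus (fun t => slice_B (exp t)));
      [apply derivable_pt_lim_comp_exp, HB |].
    apply (derivable_pt_lim_mult exp (fun t => slice_C (exp t)));
      [apply derivable_pt_lim_exp | apply derivable_pt_lim_comp_exp, HC]. }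
  pose proof (derivable_pt_lim_mult (fun t => 8 * cosh (t / 2)) _ s _ _
    (derivable_pt_lim_scal _ 8 s _ (derivable_pt_lim_cosh_half s)) Hsum) as Hprod.
  apply (derivable_pt_lim_ext
    (fun t => 8 * cosh (t / 2) * (slice_B (exp t) + exp t * slice_C (exp t)))).
  { intro t; unfold coef_A; pose proof (cosh_pos (t / 2)); field; lra. }
  assert (HdC : dC = - ((1 + / exp s) * dB + 2 * slice_C (exp s)) / (1 + exp s)).
  { replace dC with ((1 + exp s) * dC / (1 + exp s)) by (field; lra).
    replace ((1 + exp s) * dC) with (- ((1 + / exp s) * dB + 2 * slice_C (exp s))) by lra.
    reflexivity. }
  replace (4 * sinh (s / 2) * (slice_B (exp s) - exp s * slice_C (exp s)))
    with (8 * (sinh (s / 2) / 2) * (slice_B (exp s) + exp s * slice_C (exp s))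
          + 8 * cosh (s / 2) * (dB * exp s + (exp s * slice_C (exp s) + exp s * (dC * exp s))));
    [exact Hprod |].
  rewrite HdC, cosh_exp, sinh_exp, (exp_half_sqr s).
  pose proof (exp_pos (s / 2)).
  set (u := exp (s / 2)) in *; set (B := slice_B (u * u)); set (C := slice_C (u * u)).
  field; split; nra.
Qed.

Lemma met_ws_frame s D i j : 0 < s ->
  derivable_pt_lim (fun t => coef_A t / cosh (t / 2)) s D -> (i < 4)%nat -> (j < 4)%nat ->
  met gm (ws s) (ws_frame (exp (s / 2)) i) (ws_frame (exp (s / 2)) j)
    = if Nat.eqb i j then frame_coef coef_A s D i else 0.
Proof.
  intros Hs HD Hi Hj.
  rewrite (uniqueness_limite _ _ _ _ HD (derivable_coef_A_div_cosh s Hs)).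
  pose proof (exp_gt_1 s Hs) as Hr.
  rewrite met_ws, met_slice by lra.
  unfold frame_coef, coef_A; rewrite cosh_exp, sinh_exp, (exp_half_sqr s) in *.
  pose proof (exp_gt_1 (s / 2) ltac:(lra)) as Hu.
  set (u := exp (s / 2)) in *; set (B := slice_B (u * u)); set (C := slice_C (u * u)).
  destruct i as [|[|[|[|i]]]]; try lia; destruct j as [|[|[|[|j]]]]; try lia;
    unfold ws_frame, mkvec; simpl; field; repeat split; nra.
Qed.

End InvariantMetric.

Theorem proposition3p1 (gm : metric_field) :
  is_kahler_metric gm -> G_invariant gm ->
  exists A : R -> R, smooth_pos A /\
    forall s (D : R), 0 < s ->
      derivable_pt_lim (fun t => A t / cosh (t / 2)) s D ->
      forall a b c d, 0 < a * d - b * c ->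
      let q := act a b c d (ws s) in
      let coef (i : nat) : R :=
        match i with
        | 0%nat => / (8 * sinh (s / 2)) * D
        | 1%nat => A s
        | 2%nat => 2 * sinh (s / 2) * D
        | _ => A s / (cosh (s / 2) ^ 2)
        end in
      forall i j, (i < 4)%nat -> (j < 4)%nat ->
        met gm q (frame a b c d s i) (frame a b c d s j)
        = if Nat.eqb i j then coef i else 0.
Proof.
  intros Hkahler Hinv.
  exists (coef_A gm); split; [exact (coef_A_smooth gm Hkahler) |].
  intros s D Hs HD a b c d Hdet q coef i j Hi Hj; unfold q.
  rewrite !frame_dact by assumption.
  rewrite (proj1 Hinv) by (auto using M2_ws).
  exact (met_ws_frame gm Hinv Hkahler s D i j Hs HD Hi Hj).
Qed.
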